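(* Let $n,m\in\mathbb N$ and $\xi\in\mathbb S^{n-1}$, and let $\Delta:\mathbb R^n\to\mathbb R^{nm}$ be $\Delta(x)=(x,\dots,x)$. Then for every $K\in\mathcal K^n$, \[ \Delta^{-1}\big(\bar S_\xi\Pi^{\circ,m}K\big)\subseteq S_\xi\Pi^{\circ}K, \] where $\Delta^{-1}$ denotes preimage and $\Pi^\circ K=\Pi^{\circ,1}K$.
   Context: A convex body in $\mathbb R^d$ is a compact convex set with nonempty interior; $\mathcal K^n$ is the class of convex bodies in $\mathbb R^n$. Identify $\mathbb R^{nm}=(\mathbb R^n)^m$, writing $\bar x=(x_1,\dots,x_m)$. For $t\in\mathbb R$, $t_-=\max\{-t,0\}$; $n_K(y)$ is the outer unit normal at $y\in\partial K$. $\Pi^mK\subset\mathbb R^{nm}$ is the convex body with support function $h_{\Pi^mK}(\bar\theta)=\int_{\partial K}\max_{1\le i\le m}\langle\theta_i,n_K(y)\rangle_-\,d\mathcal H^{n-1}(y)$, and $\Pi^{\circ,m}K$ its polar body. For a compact set $A\subset\mathbb R^n$, its Steiner symmetral with respect to $\xi$ is $S_\xi A=\{x+\tfrac12(t-s)\xi: x\in\xi^\perp,\ t,s\in\mathbb R,\ x+t\xi\in A,\ x+s\xi\in A\}$. For a compact set $L\subset\mathbb R^{nm}$ with nonempty interior, its $m$th higher-order Steiner symmetral is $\bar S_\xi L=\{(x_i+\tfrac12(t_i-s_i)\xi)_{i=1}^m: x_i\in\xi^\perp,\ t_i,s_i\in\mathbb R,\ (x_i+t_i\xi)_{i=1}^m\in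 L,\ (x_i+s_i\xi)_{i=1}^m\in L\}$. *)

From HB Require Import structures.
From mathcomp Require Import all_boot all_order all_algebra.
From mathcomp Require Import all_classical all_reals all_analysis.
Set Implicit Arguments. Unset Strict Implicit. Unset Printing Implicit Defensive.
Import Order.TTheory GRing.Theory Num.Theory.
Import numFieldNormedType.Exports.
Local Open Scope classical_set_scope.
Local Open Scope ring_scope.

(* R^n is 'rV[R]_n ; R^{nm} = (R^n)^m is 'M[R]_(m,n), the i-th row being x_i.
   For m = 1 this is literally 'rV[R]_n = R^n. *)

Section Defs.
Variable R : realType.

Definition mdot (m n : nat) (A B : 'M[R]_(m, n)) : R :=
  \sum_(i < m) \sum_(j < n) A i j * B i j.

Definition enorm (n : nat) (x : 'rV[R]_n) : R := Num.sqrt (mdot x x).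

Definition negpart (t : R) : R := Num.max (- t) 0.

Definition convex_body (n : nat) (K : set 'rV[R]_n) : Prop :=
  [/\ compact K,
      (forall x y (l : R), K x -> K y -> 0 <= l -> l <= 1 ->
          K (l *: x + (1 - l) *: y))
    & interior K !=set0].

Definition bd (n : nat) (K : set 'rV[R]_n) : set 'rV[R]_n :=
  closure K `\` interior K.

(* outer unit normal at y (a chosen one; it is unique H^{n-1}-a.e. on bd K) *)
Definition outer_normal (n : nat) (K : set 'rV[R]_n) (y : 'rV[R]_n) : 'rV[R]_n :=
  xget 0 [set u | enorm u = 1 /\ forall z, K z -> mdot u (z - y) <= 0].

Fixpoint ball_vol (k : nat) : R :=
  match k with
  | 0 => 1
  | 1 => 2
  | k'.+2 => (2 * pi / k'.+2%:R) * ball_vol k'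
  end.

Definition diam (n : nat) (E : set 'rV[R]_n) : R :=
  sup [set r | exists x y, [/\ E x, E y & r = enorm (x - y)]].

Definition haus_term (n s : nat) (E : set 'rV[R]_n) : \bar R :=
  if pselect (E = set0) then 0%E
  else (ball_vol s * (diam E / 2) ^+ s)%:E.

Definition haus_delta (n s : nat) (d : R) (A : set 'rV[R]_n) : \bar R :=
  ereal_inf [set (\sum_(k <oo) haus_term s (F k))%E
            | F in [set F : nat -> set 'rV[R]_n |
                     A `<=` \bigcup_k F k /\
                     forall k x y, F k x -> F k y -> enorm (x - y) <= d]].

Definition hausdorff (n s : nat) (A : set 'rV[R]_n) : \bar R :=
  ereal_sup [set haus_delta s d A | d in [set d : R | 0 < d]].

(* integral over bd K of a nonnegative function g w.r.t. H^{n-1}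
   (integral of a nonnegative function w.r.t. an outer measure, layer-cake form) *)
Definition bd_integral (n : nat) (K : set 'rV[R]_n) (g : 'rV[R]_n -> R) : \bar R :=
  (\int[@lebesgue_measure R]_(t in `[0%R, +oo[%classic)
      hausdorff n.-1 (bd K `&` [set y | (t < g y)%R]))%E.

(* support function of the m-th higher-order projection body *)
Definition hPi (m n : nat) (K : set 'rV[R]_n) (Th : 'M[R]_(m, n)) : \bar R :=
  bd_integral K (fun y =>
    \big[Num.max/0]_(i < m) negpart (mdot (row i Th) (outer_normal K y))).

Definition PiM (m n : nat) (K : set 'rV[R]_n) : set 'M[R]_(m, n) :=
  [set X | forall Th, ((mdot X Th)%:E <= hPi K Th)%E].

Definition polar (m n : nat) (L : set 'M[R]_(m, n)) : set 'M[R]_(m, n) :=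
  [set Y | forall X, L X -> mdot X Y <= 1].

Definition PiPolarM (m n : nat) (K : set 'rV[R]_n) : set 'M[R]_(m, n) :=
  polar (@PiM m n K).

Definition PiPolar (n : nat) (K : set 'rV[R]_n) : set 'rV[R]_n := @PiPolarM 1 n K.

Definition steiner (n : nat) (xi : 'rV[R]_n) (A : set 'rV[R]_n) : set 'rV[R]_n :=
  [set z | exists x (t s : R), [/\ mdot x xi = 0, A (x + t *: xi), A (x + s *: xi)
                                 & z = x + ((t - s) / 2) *: xi]].

Definition steinerM (m n : nat) (xi : 'rV[R]_n) (L : set 'M[R]_(m, n))
  : set 'M[R]_(m, n) :=
  [set Z | exists (x : 'I_m -> 'rV[R]_n) (t s : 'I_m -> R),
     [/\ forall i, mdot (x i) xi = 0,
         L (\matrix_(i < m) (x i + t i *: xi)),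
         L (\matrix_(i < m) (x i + s i *: xi))
       & Z = \matrix_(i < m) (x i + ((t i - s i) / 2) *: xi)]].

Definition diagm (m n : nat) (x : 'rV[R]_n) : 'M[R]_(m, n) :=
  \matrix_(i < m) x.

End Defs.

From HB Require Import structures.
From mathcomp Require Import all_boot all_order all_algebra.
From mathcomp Require Import all_classical all_reals all_analysis.
Import Order.TTheory GRing.Theory Num.Theory.
Local Open Scope classical_set_scope.
Local Open Scope ring_scope.
Set Implicit Arguments. Unset Strict Implicit.

(* A point z lies in the preimage of the higher-order Steiner
   symmetral under the diagonal map Delta exactly when Delta z is the midpoint
   combination of two matrices (x_i + t_i xi)_i and (x_i + s_i xi)_i of
   Pi^{o,m} K.  Reading off any single row i0 (m > 0) expresses z as
   x_{i0} + ((t_{i0} - s_{i0})/2) xi, so it suffices to show that every row of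
   a matrix of Pi^{o,m} K lies in Pi^o K.
   This row property is dual to the inequality h_{Pi K}(theta_{i0}) <=
   h_{Pi^m K}(theta) between support functions: the integrand of the left side,
   (<theta_{i0}, n_K>)_-, is dominated by the max over all rows.  Since the
   integral over bd K is taken in layer-cake form with respect to the Hausdorff
   outer measure, this domination is transported by the monotonicity of the
   Hausdorff measure under inclusion and of the Lebesgue integral under
   pointwise comparison; neither step needs any measurability.  The
   inclusion holds for every set K and every direction xi. *)

Section Monotonicity.
Variable R : realType.

Lemma haus_delta_le_subset (n s : nat) (d : R) (A B : set 'rV[R]_n) :
  A `<=` B -> (haus_delta s d A <= haus_delta s d B)%E.
Proof.
move=> AB; apply: ereal_inf_le_tmp => _ [F [BF Fd] <-].
by exists F => //; split => //; exact: subset_trans BF.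
Qed.

Lemma hausdorff_le_subset (n s : nat) (A B : set 'rV[R]_n) :
  A `<=` B -> (hausdorff s A <= hausdorff s B)%E.
Proof.
move=> AB; apply: ge_ereal_sup => _ [d d0 <-].
apply: le_trans (haus_delta_le_subset s d AB) _.
by apply: ereal_sup_ubound; exists d.
Qed.

(* The Lebesgue integral is monotone in the integrand, with no measurability
   assumption: both the positive and the negative part are suprema over simple
   functions below them, and pointwise comparison transfers to these parts. *)
Lemma integral_le_pointwise d (T : measurableType d)
    (mu : {measure set T -> \bar R}) (D : set T) (f g : T -> \bar R) :
  (forall x, (f x <= g x)%E) ->
  (\int[mu]_(x in D) f x <= \int[mu]_(x in D) g x)%E.
Proof.
move=> fg; have fgD : {in [set: T], forall x, ((f \_ D) x <= (g \_ D) x)%E}.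
  by move=> x _; rewrite /patch; case: ifP.
rewrite /integral; apply: leeB; apply: ereal_sup_le => _ [h hle <-];
  exists h => // x; apply: le_trans (hle x) _.
- exact: funepos_le fgD _ (in_setT x).
- exact: funeneg_le fgD _ (in_setT x).
Qed.

Lemma bd_integral_le (n : nat) (K : set 'rV[R]_n) (g1 g2 : 'rV[R]_n -> R) :
  (forall y, g1 y <= g2 y) -> (bd_integral K g1 <= bd_integral K g2)%E.
Proof.
move=> g12; apply: integral_le_pointwise => t; apply: hausdorff_le_subset.
by move=> y [Ky /= lt_t]; split => //=; exact: lt_le_trans lt_t (g12 y).
Qed.

End Monotonicity.

Section RowsOfPolarProjectionBodies.
Variables (R : realType) (m n : nat) (K : set 'rV[R]_n).

Lemma hPi_row_le (Th : 'M[R]_(m, n)) (i0 : 'I_m) :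
  (hPi K (row i0 Th : 'M[R]_(1, n)) <= hPi K Th)%E.
Proof.
apply: bd_integral_le => y; apply: bigmax_le => [|i _].
  by apply: le_trans (le_bigmax _ _ i0); rewrite le_max lexx orbT.
have -> : row i (row i0 Th) = row i0 Th by apply/rowP => j; rewrite !mxE.
exact: le_bigmax.
Qed.

Definition row_embed (i0 : 'I_m) (X : 'rV[R]_n) : 'M[R]_(m, n) :=
  \matrix_(i < m) (if i == i0 then X else 0).

Lemma mdot_row_embed (i0 : 'I_m) (X : 'rV[R]_n) (Th : 'M[R]_(m, n)) :
  mdot (row_embed i0 X) Th = mdot X (row i0 Th).
Proof.
rewrite /mdot big_ord1 (bigD1 i0) //= [X in _ + X]big1 ?addr0.
  by apply: eq_bigr => j _; rewrite !mxE eqxx.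
by move=> i /negbTE ni; apply: big1 => j _; rewrite !mxE ni mxE mul0r.
Qed.

(* Every row of a matrix of Pi^{o,m} K lies in Pi^o K: if X is in Pi K then
   row_embed i0 X is in Pi^m K, by hPi_row_le. *)
Lemma PiPolarM_row (Y : 'M[R]_(m, n)) (i0 : 'I_m) :
  PiPolarM K Y -> PiPolar K (row i0 Y).
Proof.
move=> PY X PiX; rewrite -mdot_row_embed; apply: PY => Th.
by rewrite mdot_row_embed; exact: le_trans (PiX _) (hPi_row_le Th i0).
Qed.

End RowsOfPolarProjectionBodies.

Theorem lemma6p5 (R : realType) (n m : nat) (xi : 'rV[R]_n) (K : set 'rV[R]_n) :
  (0 < m)%N -> enorm xi = 1 -> convex_body K ->
  @diagm R m n @^-1` (steinerM xi (@PiPolarM R m n K)) `<=` steiner xi (PiPolar K).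
Proof.
move=> m_gt0 _ _ z [x [t [s [x_perp PYt PYs diag_z]]]].
pose i0 : 'I_m := Ordinal m_gt0.
exists (x i0), (t i0), (s i0); split => //.
- by have := PiPolarM_row i0 PYt; rewrite rowK.
- by have := PiPolarM_row i0 PYs; rewrite rowK.
- by have := congr1 (row i0) diag_z; rewrite /diagm !rowK.
Qed.
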